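(* Let $P,PA$ be labelings, $pc$ a label, $c$ a command with $P;PA\vdash_{pc}c$, and $\rho_1\sim_P\rho_2$, $\mu_1\sim_{PA}\mu_2$. If $\langle c,\rho_1,\mu_1,\beta\rangle\xrightarrow[d]{o}{}_i\langle c_1,\rho_1',\mu_1',\beta_1\rangle$ and $\langle c,\rho_2,\mu_2,\beta\rangle\xrightarrow[d]{o}{}_i\langle c_2,\rho_2',\mu_2',\beta_2\rangle$ (same directive $d$ and same observation $o$) in the ideal semantics w.r.t. $P$, then $c_1=c_2$, $\beta_1=\beta_2$, $\rho_1'\sim_P\rho_2'$ and $\mu_1'\sim_{PA}\mu_2'$.
   Context: Language AWhile: scalar variables $X\in\mathcal V$, arrays $a\in\mathcal A$; $e::=n\mid X\mid\mathrm{op}_{\mathbb N}(e,\dots,e)\mid be\,?\,e_1:e_2$; $be::=\mathtt{true}\mid\mathtt{false}\mid\mathrm{cmp}(e,e)\mid\mathrm{op}_{\mathbb B}(be,\dots,be)$; $c::=\mathtt{skip}\mid X:=e\mid c_1;c_2\mid\mathtt{if}\ be\ \mathtt{then}\ c_1\ \mathtt{else}\ c_2\mid\mathtt{while}\ be\ \mathtt{do}\ c\mid X\leftarrow a[e]\mid a[e]\leftarrow e'$. Scalar state $\rho:\mathcal V\to\mathbb N$; array state $\mu$ with sizes $|a|_\mu$ and values $\mu(a)[i]$; $[\![\cdot]\!]_\rho$ pure evaluation. Labels: $\mathtt{true}$=public, $\mathtt{false}$=secret; $\ell_1\sqsubseteq\ell_2$ iff $\ell_2=\mathtt{true}\Rightarrow\ell_1=\mathtt{true}$;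 $\ell_1\sqcup\ell_2=\ell_1\wedge\ell_2$. $P:\mathcal V\to$ labels, $PA:\mathcal A\to$ labels; $P(e),P(be)$ public iff all variables occurring are public. $\rho_1\sim_P\rho_2$ iff they agree on all public scalar variables; $\mu_1\sim_{PA}\mu_2$ iff they agree on sizes and contents of all public arrays. IFC typing $P;PA\vdash_{pc}c$: $\mathtt{skip}$; $X:=e$ if $pc\sqcup P(e)\sqsubseteq P(X)$; $c_1;c_2$ if both typed under $pc$; $\mathtt{if}$ if both branches typed under $pc\sqcup P(be)$; $\mathtt{while}$ if body typed under $pc\sqcup P(be)$; $X\leftarrow a[i]$ if $pc\sqcup P(i)\sqcup PA(a)\sqsubseteq P(X)$; $a[i]\leftarrow e$ if $pc\sqcup P(i)\sqcup P(e)\sqsubseteq PA(a)$. Ideal semantics w.r.t. $P$: configurations $\langle c,\rho,\mu,\beta\rangle$, $\beta$ a boolean misspeculation flag; steps $\xrightarrow[d]{o}{}_i$ with optional observation $o\in\{\mathrm{branch}(v),\mathrm{read}(a,i),\mathrm{write}(a,i)\}$ and optional directive $d\in\{\mathit{step},\mathit{force},\mathrm{load}(a',j),\mathrm{store}(a',j)\}$. $X:=e\to\mathtt{skip}$ with $\rho[X\mapsto[\![e]\!]_\rho]$; $c_1;c_2\to c_1';c_2$ whenever $c_1\to c_1'$ (same labels and state change); $\mathtt{skip};c\to c$; $\mathtt{while}\ be\ \mathtt{do}\ c\to\mathtt{if}\ be\ \mathtt{then}\ (c;\mathtt{while}\ be\ \mathtt{do}\ c)\ \mathtt{else}\ \mathtt{skip}$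 (no obs/directive, flag kept). Conditional: let $v=(P(be)\vee\neg\beta)\wedge[\![be]\!]_\rho$; with $\mathit{step}$ go to branch $v$, flag kept; with $\mathit{force}$ go to branch $\neg v$, flag set to $\mathtt{true}$; obs $\mathrm{branch}(v)$. Read $X\leftarrow a[ie]$ with $\mathit{step}$: $i=0$ if $(P(ie)=\mathtt{false}\vee P(X)=\mathtt{true})\wedge\beta$, else $i=[\![ie]\!]_\rho$; requires $i<|a|_\mu$; $X:=\mu(a)[i]$; obs $\mathrm{read}(a,i)$. Read with $\mathrm{load}(a',j)$: requires $\beta=\mathtt{true}$, $P(ie)=\mathtt{true}$, $P(X)=\mathtt{false}$, $i=[\![ie]\!]_\rho\ge|a|_\mu$, $j<|a'|_\mu$; $X:=\mu(a')[j]$; obs $\mathrm{read}(a,i)$. Write $a[ie]\leftarrow ae$ with $\mathit{step}$: $i=0$ if $(P(ie)=\mathtt{false}\vee P(ae)=\mathtt{false})\wedge\beta$, else $[\![ie]\!]_\rho$; requires $i<|a|_\mu$; $\mu[a[i]\mapsto[\![ae]\!]_\rho]$; obs $\mathrm{write}(a,i)$. Write with $\mathrm{store}(a',j)$: requires $\beta=\mathtt{true}$, $P(ie)=P(ae)=\mathtt{true}$, $i=[\![ie]\!]_\rho\ge|a|_\mu$, $j<|a'|_\mu$; $\mu[a'[j]\mapsto[\![ae]\!]_\rho]$; obs $\mathrm{write}(a,i)$. *)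

From Stdlib Require Import String List Bool Arith.
Import ListNotations.

Definition var := string.
Definition arr := string.

(* Arithmetic operators op_N and comparison/boolean operators are generic:
   an operator node carries the (pure) function it denotes. *)
Inductive aexp : Type :=
  | ANum (n : nat)
  | AId (x : var)
  | AUn (f : nat -> nat) (e : aexp)
  | ABin (f : nat -> nat -> nat) (e1 e2 : aexp)
  | ACT (b : bexp) (e1 e2 : aexp)
with bexp : Type :=
  | BTrue
  | BFalse
  | BCmp (f : nat -> nat -> bool) (e1 e2 : aexp)
  | BUn (f : bool -> bool) (b : bexp)
  | BBin (f : bool -> bool -> bool) (b1 b2 : bexp).

Inductive com : Type :=
  | CSkip
  | CAsgn (x : var) (e : aexp)
  | CSeq (c1 c2 : com)
  | CIf (be : bexp) (c1 c2 : com)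
  | CWhile (be : bexp) (c : com)
  | CARead (x : var) (a : arr) (i : aexp)
  | CAWrite (a : arr) (i : aexp) (e : aexp).

Definition state := var -> nat.
Definition mem := arr -> list nat.

Definition upd_st (rho : state) (x : var) (v : nat) : state :=
  fun y => if String.eqb x y then v else rho y.

Fixpoint upd_list (l : list nat) (i : nat) (v : nat) : list nat :=
  match l, i with
  | [], _ => []
  | _ :: t, O => v :: t
  | h :: t, S i' => h :: upd_list t i' v
  end.

Definition upd_mem (mu : mem) (a : arr) (i v : nat) : mem :=
  fun b => if String.eqb a b then upd_list (mu a) i v else mu b.

Definition asize (mu : mem) (a : arr) : nat := length (mu a).
Definition aget (mu : mem) (a : arr) (i : nat) : nat := nth i (mu a) 0.

Fixpoint aeval (rho : state) (e : aexp) : nat :=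
  match e with
  | ANum n => n
  | AId x => rho x
  | AUn f e => f (aeval rho e)
  | ABin f e1 e2 => f (aeval rho e1) (aeval rho e2)
  | ACT b e1 e2 => if beval rho b then aeval rho e1 else aeval rho e2
  end
with beval (rho : state) (b : bexp) : bool :=
  match b with
  | BTrue => true
  | BFalse => false
  | BCmp f e1 e2 => f (aeval rho e1) (aeval rho e2)
  | BUn f b => f (beval rho b)
  | BBin f b1 b2 => f (beval rho b1) (beval rho b2)
  end.

(** Labels: true = public, false = secret *)
Definition label := bool.
Definition can_flow (l1 l2 : label) : bool := implb l2 l1.
Definition join (l1 l2 : label) : label := l1 && l2.
Definition pub_vars := var -> label.
Definition pub_arrs := arr -> label.

Fixpoint label_of_aexp (P : pub_vars) (e : aexp) : label :=
  match e with
  | ANum _ => true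
  | AId x => P x
  | AUn _ e => label_of_aexp P e
  | ABin _ e1 e2 => label_of_aexp P e1 && label_of_aexp P e2
  | ACT b e1 e2 => label_of_bexp P b && label_of_aexp P e1 && label_of_aexp P e2
  end
with label_of_bexp (P : pub_vars) (b : bexp) : label :=
  match b with
  | BTrue | BFalse => true
  | BCmp _ e1 e2 => label_of_aexp P e1 && label_of_aexp P e2
  | BUn _ b => label_of_bexp P b
  | BBin _ b1 b2 => label_of_bexp P b1 && label_of_bexp P b2
  end.

Definition pub_equiv (P : pub_vars) (r1 r2 : state) : Prop :=
  forall x, P x = true -> r1 x = r2 x.

(* agreement on sizes and contents of all public arrays *)
Definition pub_equiv_mem (PA : pub_arrs) (m1 m2 : mem) : Prop :=
  forall a, PA a = true -> m1 a = m2 a.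

Inductive well_typed (P : pub_vars) (PA : pub_arrs) : label -> com -> Prop :=
  | WT_Skip : forall pc, well_typed P PA pc CSkip
  | WT_Asgn : forall pc x e,
      can_flow (join pc (label_of_aexp P e)) (P x) = true ->
      well_typed P PA pc (CAsgn x e)
  | WT_Seq : forall pc c1 c2,
      well_typed P PA pc c1 -> well_typed P PA pc c2 ->
      well_typed P PA pc (CSeq c1 c2)
  | WT_If : forall pc be c1 c2,
      well_typed P PA (join pc (label_of_bexp P be)) c1 ->
      well_typed P PA (join pc (label_of_bexp P be)) c2 ->
      well_typed P PA pc (CIf be c1 c2)
  | WT_While : forall pc be c,
      well_typed P PA (join pc (label_of_bexp P be)) c ->
      well_typed P PA pc (CWhile be c)
  | WT_ARead : forall pc x a i,
      can_flow (join (join pc (label_of_aexp P i)) (PA a)) (P x) = true ->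
      well_typed P PA pc (CARead x a i)
  | WT_AWrite : forall pc a i e,
      can_flow (join (join pc (label_of_aexp P i)) (label_of_aexp P e)) (PA a) = true ->
      well_typed P PA pc (CAWrite a i e).

Inductive observation : Type :=
  | OBranch (v : bool)
  | ORead (a : arr) (i : nat)
  | OWrite (a : arr) (i : nat).

Inductive direction : Type :=
  | DStep
  | DForce
  | DLoad (a : arr) (j : nat)
  | DStore (a : arr) (j : nat).

(** Ideal semantics w.r.t. P:
    ideal_step P c rho mu b d o c' rho' mu' b'  means
    <c,rho,mu,b> --[d]--o-->_i <c',rho',mu',b'> *)
Inductive ideal_step (P : pub_vars) :
  com -> state -> mem -> bool -> option direction -> option observation ->
  com -> state -> mem -> bool -> Prop :=
  | ISM_Asgn : forall x e rho mu b,
      ideal_step P (CAsgn x e) rho mu b None None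
                   CSkip (upd_st rho x (aeval rho e)) mu b
  | ISM_Seq : forall c1 c1' c2 rho mu b d o rho' mu' b',
      ideal_step P c1 rho mu b d o c1' rho' mu' b' ->
      ideal_step P (CSeq c1 c2) rho mu b d o (CSeq c1' c2) rho' mu' b'
  | ISM_Seq_Skip : forall c rho mu b,
      ideal_step P (CSeq CSkip c) rho mu b None None c rho mu b
  | ISM_If : forall be c1 c2 rho mu b,
      let v := (label_of_bexp P be || negb b) && beval rho be in
      ideal_step P (CIf be c1 c2) rho mu b (Some DStep) (Some (OBranch v))
                   (if v then c1 else c2) rho mu b
  | ISM_If_F : forall be c1 c2 rho mu b,
      let v := (label_of_bexp P be || negb b) && beval rho be in
      ideal_step P (CIf be c1 c2) rho mu b (Some DForce) (Some (OBranch v))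
                   (if negb v then c1 else c2) rho mu true
  | ISM_While : forall be c rho mu b,
      ideal_step P (CWhile be c) rho mu b None None
                   (CIf be (CSeq c (CWhile be c)) CSkip) rho mu b
  | ISM_ARead : forall x a ie rho mu b i,
      i = (if (negb (label_of_aexp P ie) || P x) && b then 0 else aeval rho ie) ->
      i < asize mu a ->
      ideal_step P (CARead x a ie) rho mu b (Some DStep) (Some (ORead a i))
                   CSkip (upd_st rho x (aget mu a i)) mu b
  | ISM_ARead_U : forall x a ie rho mu i a' j,
      label_of_aexp P ie = true ->
      P x = false ->
      i = aeval rho ie ->
      asize mu a <= i ->
      j < asize mu a' ->
      ideal_step P (CARead x a ie) rho mu true (Some (DLoad a' j)) (Some (ORead a i))
                   CSkip (upd_st rho x (aget mu a' j)) mu true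
  | ISM_Write : forall a ie ae rho mu b i,
      i = (if (negb (label_of_aexp P ie) || negb (label_of_aexp P ae)) && b
           then 0 else aeval rho ie) ->
      i < asize mu a ->
      ideal_step P (CAWrite a ie ae) rho mu b (Some DStep) (Some (OWrite a i))
                   CSkip rho (upd_mem mu a i (aeval rho ae)) b
  | ISM_Write_U : forall a ie ae rho mu i a' j,
      label_of_aexp P ie = true ->
      label_of_aexp P ae = true ->
      i = aeval rho ie ->
      asize mu a <= i ->
      j < asize mu a' ->
      ideal_step P (CAWrite a ie ae) rho mu true (Some (DStore a' j)) (Some (OWrite a i))
                   CSkip rho (upd_mem mu a' j (aeval rho ae)) true.

From Stdlib Require Import String Bool.

(* Both runs take the same step rule: the directive fixes the rule up to the
   shape of the command, and the common observation fixes the branch taken and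
   every accessed index.  What remains is that each update of a public variable
   or public array stores a value computed from public data only, which is what
   the typing rules guarantee. *)

Scheme aexp_mut_ind := Induction for aexp Sort Prop
  with bexp_mut_ind := Induction for bexp Sort Prop.
Combined Scheme exp_mut_ind from aexp_mut_ind, bexp_mut_ind.

Lemma eval_pub_equiv (P : pub_vars) (r1 r2 : state) :
  pub_equiv P r1 r2 ->
  (forall e, label_of_aexp P e = true -> aeval r1 e = aeval r2 e) /\
  (forall be, label_of_bexp P be = true -> beval r1 be = beval r2 be).
Proof.
  intros Hr; apply exp_mut_ind; simpl; intros;
    repeat match goal with
    | H : _ && _ = true |- _ => apply andb_prop in H as []
    | IH : ?l = true -> _ = _, Hl : ?l = true |- _ => rewrite (IH Hl); clear IH
    end; auto.
Qed.

Lemma aeval_pub_equiv (P : pub_vars) (r1 r2 : state) (e : aexp) :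
  pub_equiv P r1 r2 -> label_of_aexp P e = true -> aeval r1 e = aeval r2 e.
Proof. intros Hr; apply (proj1 (eval_pub_equiv P r1 r2 Hr)). Qed.

Lemma can_flow_join_r (l1 l2 l : label) :
  can_flow (join l1 l2) l = true -> l = true -> l2 = true.
Proof. destruct l1, l2, l; easy. Qed.

Lemma pub_equiv_upd_st (P : pub_vars) (r1 r2 : state) (x : var) (v1 v2 : nat) :
  pub_equiv P r1 r2 -> (P x = true -> v1 = v2) ->
  pub_equiv P (upd_st r1 x v1) (upd_st r2 x v2).
Proof.
  intros Hr Hv y Hy; unfold upd_st.
  destruct (String.eqb_spec x y); subst; auto.
Qed.

Lemma pub_equiv_mem_upd_mem (PA : pub_arrs) (m1 m2 : mem) (a : arr) (i v1 v2 : nat) :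
  pub_equiv_mem PA m1 m2 -> (PA a = true -> v1 = v2) ->
  pub_equiv_mem PA (upd_mem m1 a i v1) (upd_mem m2 a i v2).
Proof.
  intros Hm Hv y Hy; unfold upd_mem.
  destruct (String.eqb_spec a y); subst; auto.
  rewrite (Hm y Hy), (Hv Hy); reflexivity.
Qed.

Lemma ideal_step_skip_stuck P rho mu b d o c' rho' mu' b' :
  ~ ideal_step P CSkip rho mu b d o c' rho' mu' b'.
Proof. inversion 1. Qed.

Theorem lemma5p2 :
  forall (P : pub_vars) (PA : pub_arrs) (pc : label) (c : com)
         (rho1 rho2 : state) (mu1 mu2 : mem) (b : bool)
         (d : option direction) (o : option observation)
         (c1 : com) (rho1' : state) (mu1' : mem) (b1 : bool)
         (c2 : com) (rho2' : state) (mu2' : mem) (b2 : bool),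
    well_typed P PA pc c ->
    pub_equiv P rho1 rho2 ->
    pub_equiv_mem PA mu1 mu2 ->
    ideal_step P c rho1 mu1 b d o c1 rho1' mu1' b1 ->
    ideal_step P c rho2 mu2 b d o c2 rho2' mu2' b2 ->
    c1 = c2 /\ b1 = b2 /\ pub_equiv P rho1' rho2' /\ pub_equiv_mem PA mu1' mu2'.
Proof.
  intros P PA pc c rho1 rho2 mu1 mu2 b d o c1 rho1' mu1' b1 c2 rho2' mu2' b2
    Hwt Hrho Hmu Hstep1.
  revert pc Hwt c2 rho2 rho2' mu2 mu2' b2 Hrho Hmu.
  induction Hstep1; intros pc Hwt c2' rho2 rho2' mu2 mu2' b2 Hrho Hmu Hstep2;
    inversion Hstep2; subst; inversion Hwt; subst;
    try solve [auto | exfalso; eapply ideal_step_skip_stuck; eassumption].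
  - repeat split; auto.
    apply pub_equiv_upd_st; auto.
    intros Hx; apply (aeval_pub_equiv P); eauto using can_flow_join_r.
  - edestruct IHHstep1 as (-> & -> & ?); eauto.
  - repeat split; auto.
    apply pub_equiv_upd_st; auto.
    intros Hx; unfold aget; rewrite Hmu; eauto using can_flow_join_r.
  - repeat split; auto.
    apply pub_equiv_upd_st; auto; congruence.
  - repeat split; auto.
    apply pub_equiv_mem_upd_mem; auto.
    intros Ha; apply (aeval_pub_equiv P); eauto using can_flow_join_r.
  - repeat split; auto.
    apply pub_equiv_mem_upd_mem; auto.
    intros _; apply (aeval_pub_equiv P); auto.
Qed.
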